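(* Let $S\subseteq\mathbb{F}_2^{27}$ be the linear subspace spanned by the six vectors (written as bit strings, coordinate $1$ leftmost, coordinate $27$ rightmost) $\xi^1 = 100010001010101010100011110$, $\xi^2 = 101010111001100000001010101$, $\xi^3 = 011001100111100111100110011$, $\xi^4 = 000111100000011001100001111$, $\xi^5 = 000000011111111000011111111$, $\xi^6 = 000000000000000111111111111$, and let $Q(x)= x_{1}x_{2} + x_{1}x_{3} + x_{1}x_{8} + x_{2}x_{4} + x_{2}x_{8} + x_{2}x_{16} + x_{3}x_{4} + x_{3}x_{8} + x_{3}x_{16} + x_{4}x_{8} + x_{8}x_{16}$ (mod $2$). Let $e=(e_1,\dots,e_{27})=(3, 5, 7, 5, 1, 3, 5, 7, 1, 3, 5, 5, 3, 7, 3, 3, 7, 1, 7, 3, 1, 5, 5, 5, 3, 5, 3)$ and $c_j=e^{\pi i e_j/4}$. Then $(-1)^{Q(x)}=\prod_{j=1}^{27}c_j^{x_j}$ for every $x\in S$, but there do not exist $c'_1,\dots,c'_{27}\in\{\pm1,\pm i\}$ with $(-1)^{Q(x)}=\prod_{j=1}^{27}(c'_j)^{x_j}$ for every $x\in S$. In particular the following statement (QFP) is false in general: ''if $S$ is a linear subspace of $\mathbb{F}_2^n$, $Q:\mathbb{F}_2^n\to\mathbb{F}_2$ is a quadratic function, and there exist complex phases $c_j$ with $(-1)^{Q(x)}=\prod_j c_j^{x_j}$ for all $x\in S$, then the phases can be chosen from $\{\pm1,\pm i\}$.''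
   Context: Vectors $x\in\mathbb{F}_2^{27}$ have coordinates $x_j\in\{0,1\}$, which are used as integer exponents in $c_j^{x_j}$. *)

From HB Require Import structures.
From mathcomp Require Import all_boot all_order all_algebra all_field.
Set Implicit Arguments. Unset Strict Implicit. Unset Printing Implicit Defensive.
Import Order.TTheory GRing.Theory Num.Theory.
Local Open Scope ring_scope.

(* Vectors of F_2^27 are row vectors 'rV['F_2]_27; paper coordinate j (1..27)
   is the ordinal index j-1. *)
Definition bitvec (s : seq nat) : 'rV['F_2]_27 :=
  \row_(j < 27) (nth 0%N s j)%:R.

Definition xi1 := bitvec [:: 1;0;0;0;1;0;0;0;1;0;1;0;1;0;1;0;1;0;1;0;0;0;1;1;1;1;0]%N.
Definition xi2 := bitvec [:: 1;0;1;0;1;0;1;1;1;0;0;1;1;0;0;0;0;0;0;0;1;0;1;0;1;0;1]%N.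
Definition xi3 := bitvec [:: 0;1;1;0;0;1;1;0;0;1;1;1;1;0;0;1;1;1;1;0;0;1;1;0;0;1;1]%N.
Definition xi4 := bitvec [:: 0;0;0;1;1;1;1;0;0;0;0;0;0;1;1;0;0;1;1;0;0;0;0;1;1;1;1]%N.
Definition xi5 := bitvec [:: 0;0;0;0;0;0;0;1;1;1;1;1;1;1;1;0;0;0;0;1;1;1;1;1;1;1;1]%N.
Definition xi6 := bitvec [:: 0;0;0;0;0;0;0;0;0;0;0;0;0;0;0;1;1;1;1;1;1;1;1;1;1;1;1]%N.

(* 6 x 27 matrix whose rows are xi^1..xi^6; S is its row space. *)
Definition Xi : 'M['F_2]_(6, 27) :=
  \matrix_(k < 6, j < 27)
    (nth xi1 [:: xi1; xi2; xi3; xi4; xi5; xi6] k) 0 j.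

Definition xc (x : 'rV['F_2]_27) (k : nat) : 'F_2 := x 0 (inord k.-1).

Definition Qf (x : 'rV['F_2]_27) : 'F_2 :=
  xc x 1 * xc x 2 + xc x 1 * xc x 3 + xc x 1 * xc x 8 + xc x 2 * xc x 4
  + xc x 2 * xc x 8 + xc x 2 * xc x 16 + xc x 3 * xc x 4 + xc x 3 * xc x 8
  + xc x 3 * xc x 16 + xc x 4 * xc x 8 + xc x 8 * xc x 16.

Definition bitn (b : 'F_2) : nat := nat_of_ord b.

Definition eseq : seq nat :=
  [:: 3; 5; 7; 5; 1; 3; 5; 7; 1; 3; 5; 5; 3; 7; 3; 3; 7; 1; 7; 3; 1; 5; 5; 5; 3; 5; 3]%N.

(* zeta8 = e^{pi i/4} = (1 + i)/sqrt 2 in the algebraic complex numbers *)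
Definition zeta8 : algC := (1 + 'i) / sqrtC 2.

Definition cph (j : 'I_27) : algC := zeta8 ^+ nth 0%N eseq j.

From HB Require Import structures.
From mathcomp Require Import all_boot all_order all_algebra all_field.
Import Order.TTheory GRing.Theory Num.Theory.
Set Implicit Arguments.
Unset Strict Implicit.
Unset Printing Implicit Defensive.
Local Open Scope ring_scope.

(* S has only 64 elements, and identifying F_2 with bool turns both halves
   into finite computations.  With c_j = zeta^e_j for zeta = e^{pi i/4}, the
   product over x in S is zeta^(sum_j e_j x_j), so the first half says that
   sum_j e_j x_j = 4 Q(x) mod 8 on S.  For the second half, c'_j^4 = 1 for
   every phase in {1, -1, i, -i}; a list of 32 points of S in which every
   coordinate is 1 a multiple of 4 times, while Q is odd an odd number of
   times, then yields -1 = 1 on multiplying the 32 identities together. *)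

Lemma prod_expr_mod (R : pzSemiRingType) (z : R) (m : nat) :
  z ^+ m = 1 -> forall (I : Type) (r : seq I) (e x : I -> nat),
  \prod_(i <- r) (z ^+ e i) ^+ x i = z ^+ ((\sum_(i <- r) e i * x i) %% m).
Proof.
move=> zm1 I r e x; rewrite (eq_bigr (fun i => z ^+ (e i * x i))) => [|i _]; last first.
  by rewrite exprM.
rewrite prodrXr {1}(divn_eq (\sum_(i <- r) e i * x i) m) exprD mulnC exprM.
by rewrite zm1 expr1n mul1r.
Qed.

Lemma phases_obstruction (R : numDomainType) (n m : nat) (c : 'I_n -> R)
    (T : eqType) (X : seq T) (x : T -> 'I_n -> nat) (q : T -> nat) :
  (forall j, c j ^+ m = 1) ->
  (forall j, m %| \sum_(t <- X) x t j)%N ->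
  odd (\sum_(t <- X) q t)%N ->
  ~ (forall t, t \in X -> (-1) ^+ q t = \prod_j c j ^+ x t j).
Proof.
move=> cm1 dvd_m odd_q phases.
have : \prod_(t <- X) (-1 : R) ^+ q t = \prod_(t <- X) \prod_j c j ^+ x t j.
  by rewrite big_seq_cond [RHS]big_seq_cond; apply: eq_bigr => t /andP[tX _]; apply: phases.
rewrite prodrXr -signr_odd odd_q exchange_big big1 => [|j _]; last first.
  by rewrite prodrXr -(divnK (dvd_m j)) mulnC exprM cm1 expr1n.
by rewrite /= expr1 => N1_1; have := lt_trans (@ltrN10 R) ltr01; rewrite N1_1 ltxx.
Qed.

Lemma quarter_phase_expr4 (C : numClosedFieldType) (c : C) :
  c \in [:: 1; -1; 'i; - 'i] -> c ^+ 4 = 1.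
Proof.
have sqr_sqr (d : C) : d ^+ 4 = (d ^+ 2) ^+ 2 by rewrite -exprM.
by rewrite !inE sqr_sqr => /or4P[] /eqP->; rewrite ?sqrrN ?sqrCi ?sqrrN !expr1n.
Qed.

Lemma zeta8_expr4 : zeta8 ^+ 4 = -1.
Proof.
have zeta8_sqr : zeta8 ^+ 2 = 'i.
  rewrite /zeta8 expr_div_n sqrtCK sqrrD sqrCi expr1n mul1r addrAC subrr add0r.
  by rewrite -mulr_natr mulfK // pnatr_eq0.
by rewrite -[4%N]/(2 * 2)%N exprM zeta8_sqr sqrCi.
Qed.

Lemma zeta8_expr8 : zeta8 ^+ 8 = 1.
Proof. by rewrite -[8%N]/(4 * 2)%N exprM zeta8_expr4 sqrrN expr1n. Qed.

Lemma F2_bool (u : 'F_2) : u = (u != 0)%:R.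
Proof. by apply: val_inj; case: u => [[|[|//]] ?]. Qed.

Lemma F2_natr_odd (k : nat) : (k%:R : 'F_2) = (odd k)%:R.
Proof. by elim: k => // k IHk; rewrite -[k.+1]addn1 natrD IHk oddD; case: (odd k); apply: val_inj. Qed.

Lemma F2_natrD (a b : bool) : (a%:R + b%:R : 'F_2) = (a (+) b)%:R.
Proof. by case: a; case: b; apply: val_inj. Qed.

Lemma F2_natrM (a b : bool) : (a%:R * b%:R : 'F_2) = (a && b)%:R.
Proof. by case: a; case: b; apply: val_inj. Qed.

Lemma F2_natr_sum (I : Type) (r : seq I) (F : I -> bool) :
  \sum_(i <- r) (F i)%:R = (foldr addb false [seq F i | i <- r])%:R :> 'F_2.
Proof. by elim: r => [|i r IHr]; rewrite ?big_nil ?big_cons ?IHr ?F2_natrD. Qed.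

Lemma bitn_natr (b : bool) : bitn b%:R = b.
Proof. by case: b. Qed.

Fixpoint all_bitseqs (n : nat) : seq (seq bool) :=
  if n is n'.+1 then [seq b :: s | b <- [:: false; true], s <- all_bitseqs n']
  else [:: [::]].

Lemma mem_all_bitseqs (n : nat) (s : seq bool) : size s = n -> s \in all_bitseqs n.
Proof.
elim: n s => [|n IHn] [|b s] //= [size_s].
have cons_in c : c :: s \in [seq c :: t | t <- all_bitseqs n].
  by apply/mapP; exists s; rewrite ?IHn.
by case: b; rewrite !mem_cat cons_in ?orbT.
Qed.

Definition xi_rows : seq (seq nat) := [::
  [:: 1;0;0;0;1;0;0;0;1;0;1;0;1;0;1;0;1;0;1;0;0;0;1;1;1;1;0];
  [:: 1;0;1;0;1;0;1;1;1;0;0;1;1;0;0;0;0;0;0;0;1;0;1;0;1;0;1];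
  [:: 0;1;1;0;0;1;1;0;0;1;1;1;1;0;0;1;1;1;1;0;0;1;1;0;0;1;1];
  [:: 0;0;0;1;1;1;1;0;0;0;0;0;0;1;1;0;0;1;1;0;0;0;0;1;1;1;1];
  [:: 0;0;0;0;0;0;0;1;1;1;1;1;1;1;1;0;0;0;0;1;1;1;1;1;1;1;1];
  [:: 0;0;0;0;0;0;0;0;0;0;0;0;0;0;0;1;1;1;1;1;1;1;1;1;1;1;1]]%N.

Definition xi_bit (k j : nat) : bool := odd (nth 0 (nth [::] xi_rows k) j).

Lemma Xi_bit (k : 'I_6) (j : 'I_27) : Xi k j = (xi_bit k j)%:R.
Proof.
rewrite mxE; case: k => [[|[|[|[|[|[|//]]]]]] ?] /=;
  by rewrite /xi1 /xi2 /xi3 /xi4 /xi5 /xi6 /bitvec mxE F2_natr_odd.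
Qed.

Definition bitrow (s : seq bool) : 'rV['F_2]_6 := \row_k (nth false s k)%:R.

Lemma bitrowK (a : 'rV['F_2]_6) : bitrow [seq a 0 k != 0 | k <- enum 'I_6] = a.
Proof.
apply/rowP=> k; rewrite mxE [RHS]F2_bool (nth_map ord0) ?size_enum_ord //.
by rewrite nth_ord_enum.
Qed.

Lemma sub_Xi_bitrow (x : 'rV['F_2]_27) :
  (x <= Xi)%MS -> exists2 s, s \in all_bitseqs 6 & x = bitrow s *m Xi.
Proof.
case/submxP=> a ->; exists [seq a 0 k != 0 | k <- enum 'I_6]; last by rewrite bitrowK.
by rewrite mem_all_bitseqs // size_map size_enum_ord.
Qed.

Definition span_bit (s : seq bool) (j : nat) : bool :=
  foldr addb false [seq nth false s k && xi_bit k j | k <- iota 0 6].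

Lemma bitrow_mulmx_Xi (s : seq bool) (j : 'I_27) :
  (bitrow s *m Xi) 0 j = (span_bit s j)%:R.
Proof.
rewrite mxE (eq_bigr (fun k : 'I_6 => (nth false s k && xi_bit k j)%:R)); last first.
  by move=> k _; rewrite mxE Xi_bit F2_natrM.
by rewrite -(big_mkord xpredT (fun k => (nth false s k && xi_bit k j)%:R)) F2_natr_sum.
Qed.

Definition Q_terms : seq (nat * nat) := [:: (1, 2); (1, 3); (1, 8); (2, 4);
  (2, 8); (2, 16); (3, 4); (3, 8); (3, 16); (4, 8); (8, 16)]%N.

Definition Q_bit (g : nat -> bool) : bool :=
  foldr addb false [seq g m.1 && g m.2 | m <- Q_terms].

Lemma Qf_terms (x : 'rV['F_2]_27) : Qf x = \sum_(m <- Q_terms) xc x m.1 * xc x m.2.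
Proof. by rewrite /Qf !big_cons big_nil addr0 !addrA. Qed.

Definition Q_span (s : seq bool) : bool := Q_bit (fun k => span_bit s k.-1).

Lemma bitn_Qf_bitrow (s : seq bool) : bitn (Qf (bitrow s *m Xi)) = Q_span s.
Proof.
rewrite Qf_terms (eq_big_seq (fun m => (span_bit s m.1.-1 && span_bit s m.2.-1)%:R)).
  by rewrite F2_natr_sum bitn_natr.
have Q_terms_range : all (fun m => (m.1.-1 < 27) && (m.2.-1 < 27))%N Q_terms by [].
move=> m /(allP Q_terms_range)/andP[lt1 lt2].
by rewrite /xc !bitrow_mulmx_Xi !inordK ?F2_natrM.
Qed.

Lemma span_weight_mod8 :
  all (fun s => (\sum_(0 <= j < 27) nth 0 eseq j * span_bit s j) %% 8 == 4 * Q_span s)%N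
    (all_bitseqs 6).
Proof. by rewrite unlock; vm_compute. Qed.

Definition certificate : seq (seq bool) := map (map odd) [::
  [:: 0;0;0;1;0;0]; [:: 0;0;0;1;0;0]; [:: 0;0;0;1;0;0]; [:: 0;0;0;1;1;1];
  [:: 0;0;0;1;1;1]; [:: 0;0;1;0;0;0]; [:: 0;0;1;0;1;0]; [:: 0;0;1;1;0;0];
  [:: 0;0;1;1;0;0]; [:: 0;0;1;1;0;0]; [:: 0;0;1;1;1;1]; [:: 0;0;1;1;1;1];
  [:: 0;1;0;0;0;0]; [:: 0;1;0;0;0;0]; [:: 0;1;0;0;0;0]; [:: 0;1;0;0;0;1];
  [:: 0;1;0;0;0;1]; [:: 0;1;0;0;1;0]; [:: 0;1;0;1;1;0]; [:: 0;1;0;1;1;0];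
  [:: 0;1;0;1;1;0]; [:: 0;1;1;0;0;0]; [:: 0;1;1;0;0;0]; [:: 0;1;1;0;0;0];
  [:: 0;1;1;0;0;1]; [:: 0;1;1;0;0;1]; [:: 0;1;1;0;0;1]; [:: 0;1;1;1;0;0];
  [:: 0;1;1;1;0;0]; [:: 0;1;1;1;0;0]; [:: 1;0;0;0;0;1]; [:: 1;0;0;0;1;0]]%N.

Lemma certificate_coords_mod4 :
  all (fun j => 4 %| \sum_(s <- certificate) span_bit s j)%N (iota 0 27).
Proof. by rewrite unlock; vm_compute. Qed.

Lemma certificate_Q_odd : odd (\sum_(s <- certificate) Q_span s)%N.
Proof. by rewrite unlock; vm_compute. Qed.

Lemma cph_phases (x : 'rV['F_2]_27) : (x <= Xi)%MS ->
  (-1 : algC) ^+ bitn (Qf x) = \prod_(j < 27) cph j ^+ bitn (x 0 j).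
Proof.
case/sub_Xi_bitrow=> s s_bits ->.
under eq_bigr => j _ do rewrite bitrow_mulmx_Xi bitn_natr.
rewrite /cph (prod_expr_mod zeta8_expr8) bitn_Qf_bitrow.
rewrite -(big_mkord xpredT (fun j => nth 0 eseq j * span_bit s j)%N).
by rewrite (eqP (allP span_weight_mod8 s s_bits)) exprM zeta8_expr4.
Qed.

Lemma no_quarter_phases : ~ (exists c' : 'I_27 -> algC,
    (forall j, c' j \in [:: 1; -1; 'i; - 'i]) /\
    (forall x : 'rV['F_2]_27, (x <= Xi)%MS ->
       (-1 : algC) ^+ bitn (Qf x) = \prod_(j < 27) c' j ^+ bitn (x 0 j))).
Proof.
case=> c' [c'_quarter c'_phases].
apply: (phases_obstruction (m := 4) (c := c') (X := certificate) (x := span_bit)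
  (q := Q_span)) => [j | j | | s _].
- exact: quarter_phase_expr4.
- by move: (allP certificate_coords_mod4 j); rewrite mem_iota ltn_ord; apply.
- exact: certificate_Q_odd.
rewrite -bitn_Qf_bitrow c'_phases ?submxMl //.
by apply: eq_bigr => j _; rewrite bitrow_mulmx_Xi bitn_natr.
Qed.

Theorem mainTheorem2 :
  (forall x : 'rV['F_2]_27, (x <= Xi)%MS ->
     (-1 : algC) ^+ bitn (Qf x) = \prod_(j < 27) cph j ^+ bitn (x 0 j))
  /\
  ~ (exists c' : 'I_27 -> algC,
       (forall j, c' j \in [:: 1; -1; 'i; - 'i]) /\
       (forall x : 'rV['F_2]_27, (x <= Xi)%MS ->
          (-1 : algC) ^+ bitn (Qf x) = \prod_(j < 27) c' j ^+ bitn (x 0 j))).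
Proof. exact: conj cph_phases no_quarter_phases. Qed.
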